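(* Let $\mathbb{F}$ be a field with $\mathrm{char}(\mathbb{F})\neq 2$ and let $L$ be a finite-dimensional Lie algebra over $\mathbb{F}$. If $b(L)\leq 1$, then $L$ is solvable.
   Context: For $x\in L$, $b(x)=\mathrm{rank}(\mathrm{ad}_x)$ and the breadth of $L$ is $b(L)=\max\{b(x)\mid x\in L\}$. *)

From HB Require Import structures.
From mathcomp Require Import all_boot all_order all_algebra.
Set Implicit Arguments. Unset Strict Implicit. Unset Printing Implicit Defensive.
Import GRing.Theory.
Local Open Scope ring_scope.


Definition is_lie_bracket (F : fieldType) (V : vectType F) (br : V -> V -> V) : Prop :=
  [/\ (forall (a : F) (x y z : V), br (a *: x + y) z = a *: br x z + br y z),
      (forall (a : F) (x y z : V), br x (a *: y + z) = a *: br x y + br x z),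
      (forall x : V, br x x = 0) &
      (forall x y z : V, br x (br y z) + br y (br z x) + br z (br x y) = 0)].

Definition ad (F : fieldType) (V : vectType F) (br : V -> V -> V) (x : V) : 'End(V) :=
  linfun (br x).

Definition breadth_elt (F : fieldType) (V : vectType F) (br : V -> V -> V) (x : V) : nat :=
  \dim (limg (ad br x))%VS.

(* Derived subalgebra [U,U]: the span of all brackets [u,v] with u, v in U.
   By bilinearity of br this is the span of the brackets of basis vectors. *)
Definition derived_sub (F : fieldType) (V : vectType F) (br : V -> V -> V)
    (U : {vspace V}) : {vspace V} :=
  <<[seq br u v | u <- vbasis U, v <- vbasis U]>>%VS.

Fixpoint derived_series (F : fieldType) (V : vectType F) (br : V -> V -> V)
    (k : nat) : {vspace V} :=
  if k is k'.+1 then derived_sub br (derived_series br k') else fullv%VS.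

Definition lie_solvable (F : fieldType) (V : vectType F) (br : V -> V -> V) : Prop :=
  exists k : nat, derived_series br k = 0%VS.

From HB Require Import structures.
From mathcomp Require Import all_boot all_order all_algebra.
From Stdlib Require Import Classical.
Set Implicit Arguments. Unset Strict Implicit. Unset Printing Implicit Defensive.
Import GRing.Theory.
Local Open Scope ring_scope.

(* If b(L) <= 1, any two nonzero brackets [x, y] and [a, b] are proportional:
   otherwise [a, y] and [x, b] would lie in two distinct lines and vanish, so
   the image of ad_(x + a), of dimension at most one, would contain both
   [x, y] and [a, b].  Hence [L, L] is at most a line, so [[L, L], [L, L]] = 0. *)

Lemma vline_inter_eq0 (F : fieldType) (V : vectType F) (u v w : V) :
  u \notin <[v]>%VS -> w \in <[u]>%VS -> w \in <[v]>%VS -> w = 0.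
Proof.
move=> u_notin /vlineP[c ->] cu_in; have [->|c_nz] := eqVneq c 0; first by rewrite scale0r.
by case/negP: u_notin; rewrite -[u](scalerK c_nz) memvZ.
Qed.

Section LieBracket.

Variables (F : fieldType) (V : vectType F) (br : V -> V -> V).
Hypothesis br_lie : is_lie_bracket br.

Lemma brDl x y z : br (x + y) z = br x z + br y z.
Proof. by case: br_lie => brl _ _ _; rewrite -{1}[x]scale1r brl scale1r. Qed.

Lemma brDr x y z : br z (x + y) = br z x + br z y.
Proof. by case: br_lie => _ brr _ _; rewrite -{1}[x]scale1r brr scale1r. Qed.

Lemma br0l z : br 0 z = 0.
Proof. by apply/eqP; rewrite -(inj_eq (addrI (br 0 z))) -brDl !addr0. Qed.

Lemma br0r z : br z 0 = 0.
Proof. by apply/eqP; rewrite -(inj_eq (addrI (br z 0))) -brDr !addr0. Qed.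

Lemma brZl a x z : br (a *: x) z = a *: br x z.
Proof. by case: br_lie => brl _ _ _; rewrite -[a *: x]addr0 brl br0l addr0. Qed.

Lemma brZr a x z : br z (a *: x) = a *: br z x.
Proof. by case: br_lie => _ brr _ _; rewrite -[a *: x]addr0 brr br0r addr0. Qed.

Lemma brvv x : br x x = 0.
Proof. by case: br_lie. Qed.

Lemma br_anticomm x y : br y x = - br x y.
Proof.
apply/eqP; rewrite -addr_eq0 addrC.
by have := brvv (x + y); rewrite !(brDl, brDr) !brvv add0r addr0 => ->.
Qed.

Lemma br_linear x : linear (br x).
Proof. by move=> a u v; rewrite brDr brZr. Qed.

Lemma adE x : ad br x =1 br x.
Proof. exact: lfunE (HB.pack (br x) (GRing.isLinear.Build _ _ _ _ _ (br_linear x))). Qed.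

Lemma br_in_limg_ad x y : br x y \in limg (ad br x).
Proof. by rewrite -adE memv_img ?memvf. Qed.

Lemma derived_sub_le (U W : {vspace V}) :
  {in U &, forall u v, br u v \in W} -> (derived_sub br U <= W)%VS.
Proof.
move=> brUW; apply/span_subvP => _ /allpairsP[[u v] [/= u_in v_in ->]].
exact: brUW (vbasis_mem u_in) (vbasis_mem v_in).
Qed.

Lemma derived_sub_vline_eq0 (U : {vspace V}) v :
  (U <= <[v]>)%VS -> derived_sub br U = 0%VS.
Proof.
move=> sUv; apply/eqP; rewrite -subv0; apply: derived_sub_le.
move=> _ _ /(subvP sUv)/vlineP[c ->] /(subvP sUv)/vlineP[d ->].
by rewrite brZl brZr brvv !scaler0 mem0v.
Qed.

Section BreadthOne.

Hypothesis breadth_le1 : forall x : V, (breadth_elt br x <= 1)%N.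

Lemma limg_ad_line x y : br x y != 0 -> limg (ad br x) = <[br x y]>%VS.
Proof.
move=> nz; apply/esym/eqP; rewrite eqEdim -memvE br_in_limg_ad dim_vline nz.
exact: breadth_le1.
Qed.

Lemma br_in_line x y z : br x y != 0 -> br x z \in <[br x y]>%VS.
Proof. by move/limg_ad_line <-; apply: br_in_limg_ad. Qed.

Lemma br_in_line_left x y z : br x y != 0 -> br z y \in <[br x y]>%VS.
Proof.
move=> nz; have nz_yx : br y x != 0 by rewrite br_anticomm oppr_eq0.
rewrite br_anticomm memvN; have /vlineP[k ->] := br_in_line z nz_yx.
by rewrite br_anticomm scalerN memvN memvZ ?memv_line.
Qed.

Lemma brackets_in_line x y a b : br x y != 0 -> br a b \in <[br x y]>%VS.
Proof.
move=> nz_xy; have [//|notin] := boolP (br a b \in <[br x y]>%VS).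
have nz_ab : br a b != 0 by apply: contraNneq notin => ->; apply: mem0v.
have ay0 : br a y = 0.
  exact: vline_inter_eq0 notin (br_in_line y nz_ab) (br_in_line_left a nz_xy).
have xb0 : br x b = 0.
  exact: vline_inter_eq0 notin (br_in_line_left x nz_ab) (br_in_line b nz_xy).
have := @br_in_line (x + a) y b.
by rewrite !brDl ay0 xb0 addr0 add0r (negPf notin) => /(_ nz_xy).
Qed.

Lemma derived_series1_line x y :
  br x y != 0 -> (derived_series br 1 <= <[br x y]>)%VS.
Proof. by move=> nz; apply: derived_sub_le => a b _ _; apply: brackets_in_line. Qed.

End BreadthOne.

End LieBracket.

Theorem proposition2p4 (F : fieldType) (V : vectType F) (br : V -> V -> V) :
  (2 \notin [pchar F])%N ->
  is_lie_bracket br ->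
  (forall x : V, (breadth_elt br x <= 1)%N) ->
  lie_solvable br.
Proof.
move=> _ br_lie breadth_le1.
have [[x [y nz]] | abelian] := classic (exists x y, br x y != 0).
  have L1_line := derived_series1_line br_lie breadth_le1 nz.
  by exists 2%N; apply: (derived_sub_vline_eq0 br_lie L1_line).
exists 1%N; apply/eqP; rewrite -subv0; apply: derived_sub_le => u v _ _.
by rewrite memv0; apply/negPn/negP => nz; apply: abelian; exists u, v.
Qed.
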